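(* Let $\mathcal{X}$, $f_i$, the breakpoints and the piecewise linear functions $\overline{f}_i$ be as in the context, and consider the problem (SP): $\min_{(y,x)\in\mathcal{X}}\sum_{i=1}^{n_y}\overline{f}_i(y_i)+\sum_{\omega\in\Omega_1}p_\omega c_\omega^Tx_\omega$. Let $(y^*,x^* )\in\mathcal{X}$ be an optimal solution of (SP). Then (SP) has an optimal solution that is an extreme point of the polyhedron $\mathcal{X}(y^* )=\{(y,x)\in\mathcal{X}: y_i=y^*_i \ \forall i\in\{1,\dots,n_{\mathrm{I}}\}\}$.
   Context: Let $\Omega_1$ be a finite index set, $n_y\geq n_{\mathrm{I}}\geq0$ integers, $A\in\mathbb{R}^{m_1\times n_y}$, $b\in\mathbb{R}^{m_1}$, $D\in\mathbb{R}^{m_2\times n_y}$, and for each $\omega\in\Omega_1$: $p_\omega\in\mathbb{R}$, $c_\omega\in\mathbb{R}^{n_x}$, $B_\omega\in\mathbb{R}^{m_2\times n_x}$, $d_\omega\in\mathbb{R}^{m_2}$. Let $\mathcal{X}=\{(y,\{x_\omega\}_{\omega\in\Omega_1})\geq0: y\in\mathbb{Z}^{n_{\mathrm{I}}}\times\mathbb{R}^{n_y-n_{\mathrm{I}}},\ Ay=b,\ B_\omega x_\omega+Dy=d_\omega\ \forall\omega\in\Omega_1\}$, assumed nonempty and bounded, so that there are vectors $\underline{y}\leq\overline{y}$ with $\underline{y}\leq y\leq\overline{y}$ for all $(y,x)\in\mathcal{X}$. Functions $f_i:\mathbb{R}\to\mathbb{R}$ ($i=1,\dots,n_y$) are concave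 and lower semicontinuous. For each $i$, given breakpoints $y_i^{(1)}<y_i^{(2)}<\dots<y_i^{(k_i)}$ ($k_i\geq2$) with $y_i\in[y_i^{(1)},y_i^{(k_i)}]$ for every $(y,x)\in\mathcal{X}$, define $\overline{f}_i:[y_i^{(1)},y_i^{(k_i)}]\to\mathbb{R}$ by $\overline{f}_i(y_i)=\frac{f_i(y_i^{(j+1)})-f_i(y_i^{(j)})}{y_i^{(j+1)}-y_i^{(j)}}(y_i-y_i^{(j)})+f_i(y_i^{(j)})$ for $y_i\in[y_i^{(j)},y_i^{(j+1)}]$, $j=1,\dots,k_i-1$ (the formulas agree at common breakpoints). *)

From HB Require Import structures.
From mathcomp Require Import all_boot all_order all_algebra.
From mathcomp Require Import reals.
Import Order.TTheory GRing.Theory Num.Theory.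
Local Open Scope ring_scope.

Section Defs.
Context {R : realType}.

Definition concave_fun (f : R -> R) : Prop :=
  forall a b t : R, 0 <= t -> t <= 1 ->
    t * f a + (1 - t) * f b <= f (t * a + (1 - t) * b).

Definition lsc_fun (f : R -> R) : Prop :=
  forall (a e : R), 0 < e -> exists2 del : R, 0 < del &
    forall z : R, `|z - a| < del -> f a - e < f z.

Definition valid_breakpoints (s : seq R) : Prop :=
  (2 <= size s)%N /\ sorted (fun u v : R => u < v) s.

(* Piecewise-linear interpolation of f at the breakpoints s:
   on [s_j, s_{j+1}] it is the chord of f between s_j and s_{j+1}.
   (The first segment containing y is used; segments agree at common
   breakpoints.  Values outside [head, last] are irrelevant.) *)
Fixpoint pwl (f : R -> R) (s : seq R) (y : R) : R :=
  match s with
  | a :: s' =>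
      match s' with
      | b :: rest =>
          if (y <= b) || nilp rest
          then (f b - f a) / (b - a) * (y - a) + f a
          else pwl f s' y
      | [::] => f a
      end
  | [::] => 0
  end.

End Defs.

Definition inX (R : realType) (ny nI nx m1 m2 : nat) (Om : finType)
  (A : 'M[R]_(m1, ny)) (b : 'cV[R]_m1) (D : 'M[R]_(m2, ny))
  (B : Om -> 'M[R]_(m2, nx)) (d : Om -> 'cV[R]_m2)
  (y : 'cV[R]_ny) (x : Om -> 'cV[R]_nx) : Prop :=
  (forall i : 'I_ny, 0 <= y i 0) /\
  (forall (w : Om) (j : 'I_nx), 0 <= x w j 0) /\
  (forall i : 'I_ny, (i < nI)%N -> y i 0 \is a Num.int) /\
  A *m y = b /\
  (forall w : Om, B w *m x w + D *m y = d w).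

Definition objSP (R : realType) (ny nx : nat) (Om : finType)
  (f : 'I_ny -> R -> R) (bp : 'I_ny -> seq R)
  (p : Om -> R) (c : Om -> 'cV[R]_nx)
  (y : 'cV[R]_ny) (x : Om -> 'cV[R]_nx) : R :=
  \sum_(i < ny) pwl (f i) (bp i) (y i 0)
  + \sum_(w : Om) p w * (\sum_(j < nx) c w j 0 * x w j 0).

Definition extreme_point (R : realType) (ny nx : nat) (Om : finType)
  (S : 'cV[R]_ny -> (Om -> 'cV[R]_nx) -> Prop)
  (y : 'cV[R]_ny) (x : Om -> 'cV[R]_nx) : Prop :=
  S y x /\
  forall (y1 y2 : 'cV[R]_ny) (x1 x2 : Om -> 'cV[R]_nx) (t : R),
    S y1 x1 -> S y2 x2 -> 0 < t -> t < 1 ->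
    y = t *: y1 + (1 - t) *: y2 ->
    (forall w, x w = t *: x1 w + (1 - t) *: x2 w) ->
    y1 = y2 /\ (forall w, x1 w = x2 w).

Arguments inX {R ny} nI {nx m1 m2 Om} A b D B d y x.
Arguments objSP {R ny nx Om} f bp p c y x.
Arguments extreme_point {R ny nx Om} S y x.

(* Each interpolant [pwl (f i) (bp i)] equals, on the breakpoint range, one chord
   of [f i] over consecutive breakpoints and lies below all the others, because a
   concave function is above its chord inside the chord's interval and below it
   outside; so it is a minimum of affine functions and the objective of (SP) is
   concave on X.
   Encode (y, x) as a nonnegative coordinate vector. If an optimal point z of
   X(ystar) is a proper convex combination t z1 + (1 - t) z2 with z1 <> z2, move
   from z along z1 - z2 until a coordinate vanishes (ratio test).  The move stays
   in X(ystar) since the integer coordinates are fixed there, it is possible since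
   boundedness forces z1 - z2 to have a negative coordinate, it keeps optimality
   since z is a convex combination of the new point and z2 and the objective is
   concave, and it strictly shrinks the support of z, as every coordinate vanishing
   at z vanishes at z1 and z2.  Induction on the support size ends at an optimal
   extreme point. *)

From HB Require Import structures.
From mathcomp Require Import all_boot all_order all_algebra.
From mathcomp Require Import boolp reals ring lra.
Import Order.TTheory GRing.Theory Num.Theory.
Set Implicit Arguments.
Unset Strict Implicit.
Unset Printing Implicit Defensive.
Local Open Scope ring_scope.

Section Chords.
Variables (R : realType) (f : R -> R).

Definition chord (u v y : R) : R := (f v - f u) / (v - u) * (y - u) + f u.

Lemma chord_leE u v y g : u < v ->
  (chord u v y <= g) = ((f v - f u) * (y - u) <= (g - f u) * (v - u)).
Proof. by move=> uv; rewrite /chord -lerBrDr mulrAC ler_pdivrMr ?subr_gt0. Qed.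

Lemma chord_geE u v y g : u < v ->
  (g <= chord u v y) = ((g - f u) * (v - u) <= (f v - f u) * (y - u)).
Proof. by move=> uv; rewrite /chord -lerBlDr mulrAC ler_pdivlMr ?subr_gt0. Qed.

Hypothesis f_concave : concave_fun f.

Lemma chord_le u v y : u < v -> u <= y -> y <= v -> chord u v y <= f y.
Proof.
move=> uv uy yv.
have vu0 : v - u != 0 by rewrite subr_eq0 gt_eqF.
set t := (v - y) / (v - u).
have t0 : 0 <= t by rewrite divr_ge0 // subr_ge0 // ltW.
have t1 : t <= 1 by rewrite ler_pdivrMr ?subr_gt0 // mul1r lerD2l lerN2.
have := f_concave u v t0 t1.
have -> : t * u + (1 - t) * v = y by rewrite /t; field.
by have -> : t * f u + (1 - t) * f v = chord u v y by rewrite /t /chord; field.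
Qed.

(* Both cases are the cross-multiplied form of [chord_le] for another triple. *)
Lemma le_chord u v y : u < v -> (y <= u) || (v <= y) -> f y <= chord u v y.
Proof.
move=> uv /orP[yu|vy]; rewrite chord_geE //.
- have := chord_le (u := y) (v := v) (y := u) (le_lt_trans yu uv) yu (ltW uv).
  by rewrite chord_leE ?(le_lt_trans yu uv) //; nra.
- have := chord_le (u := u) (v := y) (y := v) (lt_le_trans uv vy) (ltW uv) vy.
  by rewrite chord_leE ?(lt_le_trans uv vy) //; nra.
Qed.

End Chords.

Section PiecewiseLinear.
Variables (R : realType) (f : R -> R).
Hypothesis f_concave : concave_fun f.

Lemma pwl_cons2 a b rest y : pwl f [:: a, b & rest] y =
  if (y <= b) || nilp rest then chord f a b y else pwl f (b :: rest) y.
Proof. by []. Qed.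

Lemma sorted_zip_behead (b u v : R) rest : sorted <%R (b :: rest) ->
  (u, v) \in zip (b :: rest) rest -> b <= u /\ u < v.
Proof.
elim: rest b => [|c rest IH] b //= /andP[bc c_rest].
rewrite in_cons => /orP[/eqP[-> ->]//|uv_in].
have [cu uv] := IH c c_rest uv_in.
by split=> //; apply: le_trans (ltW bc) cu.
Qed.

Lemma pwl_eq_chord (s : seq R) y : (2 <= size s)%N -> sorted <%R s ->
  head 0 s <= y -> y <= last 0 s ->
  exists u v, [/\ (u, v) \in zip s (behead s), u < v, u <= y, y <= v &
                  pwl f s y = chord f u v y].
Proof.
case: s => [|a [|b rest]] // _.
elim: rest a b => [|c rest IH] a b s_sorted ay y_last; rewrite pwl_cons2.
  by move: s_sorted => /andP[ab _]; exists a, b; rewrite orbT mem_seq1 eqxx.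
case/andP: s_sorted => ab bc_sorted.
case: ifP => [/orP[yb|//]|/negbT]; first by exists a, b; rewrite in_cons eqxx.
rewrite negb_or -ltNge => /andP[by_ _].
have [u [v [uv_in uv uy yv ->]]] := IH b c bc_sorted (ltW by_) y_last.
by exists u, v; rewrite in_cons uv_in orbT.
Qed.

Lemma pwl_le_chord (s : seq R) y u v : (2 <= size s)%N -> sorted <%R s ->
  head 0 s <= y -> y <= last 0 s -> (u, v) \in zip s (behead s) ->
  pwl f s y <= chord f u v y.
Proof.
case: s => [|a [|b rest]] // _.
elim: rest a b => [|c rest IH] a b s_sorted ay y_last; rewrite pwl_cons2.
  by rewrite mem_seq1 orbT => /eqP[-> ->].
case/andP: s_sorted => ab bc_sorted; rewrite in_cons => /orP[/eqP[-> ->]|uv_in].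
  case: ifP => // /negbT; rewrite negb_or -ltNge => /andP[by_ _].
  have [u' [v' [_ uv' uy vy ->]]] :=
    pwl_eq_chord (s := [:: b, c & rest]) isT bc_sorted (ltW by_) y_last.
  apply: le_trans (chord_le f_concave uv' uy vy) _.
  by apply: (le_chord f_concave) => //; rewrite (ltW by_) orbT.
have [bu uv] := sorted_zip_behead (rest := c :: rest) bc_sorted uv_in.
case: ifP => [/orP[yb|//]|/negbT].
  apply: le_trans (chord_le f_concave ab ay yb) _.
  by apply: (le_chord f_concave) => //; rewrite (le_trans yb bu).
by rewrite negb_or -ltNge => /andP[by_ _]; apply: IH => //; apply: ltW.
Qed.

Lemma pwl_concave (s : seq R) a b t : (2 <= size s)%N -> sorted <%R s ->
  head 0 s <= a -> a <= last 0 s -> head 0 s <= b -> b <= last 0 s ->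
  0 <= t -> t <= 1 ->
  t * pwl f s a + (1 - t) * pwl f s b <= pwl f s (t * a + (1 - t) * b).
Proof.
move=> s_size s_sorted ha al hb bl t0 t1.
have t1' : 0 <= 1 - t by rewrite subr_ge0.
have hz : head 0 s <= t * a + (1 - t) * b.
  by have := ler_wpM2l t0 ha; have := ler_wpM2l t1' hb; lra.
have zl : t * a + (1 - t) * b <= last 0 s.
  by have := ler_wpM2l t0 al; have := ler_wpM2l t1' bl; lra.
have [u [v [uv_in _ _ _ ->]]] := pwl_eq_chord s_size s_sorted hz zl.
have -> : chord f u v (t * a + (1 - t) * b) =
          t * chord f u v a + (1 - t) * chord f u v b by rewrite /chord; ring.
have := ler_wpM2l t0 (pwl_le_chord s_size s_sorted ha al uv_in).
have := ler_wpM2l t1' (pwl_le_chord s_size s_sorted hb bl uv_in).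
lra.
Qed.

End PiecewiseLinear.

Lemma convex_comb_eq0 (R : realFieldType) (t a b : R) : 0 < t -> t < 1 ->
  0 <= a -> 0 <= b -> t * a + (1 - t) * b = 0 -> a = 0 /\ b = 0.
Proof.
move=> t0 t1 a0 b0 comb0.
have ta := mulr_ge0 (ltW t0) a0.
have tb : 0 <= (1 - t) * b by rewrite mulr_ge0 // subr_ge0 ltW.
have /eqP : t * a = 0 by lra.
have /eqP : (1 - t) * b = 0 by lra.
by rewrite !mulf_eq0 (gt_eqF t0) subr_eq0 (gt_eqF t1) => /eqP-> /eqP->.
Qed.

Lemma ratio_test (R : realFieldType) (K : finType) (z u : K -> R) k1 :
  (forall k, 0 <= z k) -> u k1 < 0 ->
  exists s k0, [/\ 0 <= s, u k0 < 0, z k0 + s * u k0 = 0 &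
                   forall k, 0 <= z k + s * u k].
Proof.
move=> z_ge0 uk1.
have [k0 uk0 k0_min] := arg_minP (fun k => z k / - u k) (P := fun k => u k < 0) uk1.
have s_ge0 : 0 <= z k0 / - u k0 by rewrite divr_ge0 ?z_ge0 // oppr_ge0 ltW.
exists (z k0 / - u k0), k0; split=> // [|k]; first by field; rewrite ltr0_neq0.
case: (ltP (u k) 0) => [uk|uk]; last exact: addr_ge0 (z_ge0 k) (mulr_ge0 s_ge0 uk).
by have := k0_min k uk; rewrite ler_pdivlMr ?oppr_gt0 // mulrN; lra.
Qed.

Section ConcaveMinimum.
Variables (R : realType) (K : finType).
Local Notation vec := {ffun K -> R}.

Definition comb (t : R) (z1 z2 : vec) : vec :=
  [ffun k => t * z1 k + (1 - t) * z2 k].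
Definition shift (s : R) (z z1 z2 : vec) : vec :=
  [ffun k => z k + s * (z1 k - z2 k)].
Definition support (z : vec) := [set k | z k != 0].

Variables (S : vec -> Prop) (F : vec -> R).

Definition extreme (z : vec) := S z /\
  forall z1 z2 t, S z1 -> S z2 -> 0 < t -> t < 1 -> z = comb t z1 z2 -> z1 = z2.

Definition minimizer (z : vec) := S z /\ forall z', S z' -> F z <= F z'.

Hypothesis S_ge0 : forall z, S z -> forall k, 0 <= z k.
Hypothesis S_bounded : exists M, forall z k, S z -> z k <= M.
Hypothesis S_shift : forall s z z1 z2, S z -> S z1 -> S z2 ->
  (forall k, 0 <= shift s z z1 z2 k) -> S (shift s z z1 z2).
Hypothesis F_concave : forall t z1 z2, S z1 -> S z2 -> 0 <= t -> t <= 1 ->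
  t * F z1 + (1 - t) * F z2 <= F (comb t z1 z2).

Lemma exists_decreasing_coord z1 z2 : S z1 -> S z2 -> z1 != z2 ->
  exists k, z1 k < z2 k.
Proof.
move=> S1 S2 z12.
case: (boolP [exists k, z1 k < z2 k]) => [/existsP//|/existsPn z21].
have {}z21 k : z2 k <= z1 k by rewrite leNgt z21.
have [k1 z12k1] : exists k, z1 k != z2 k.
  apply/existsP; apply: contraNT z12 => /existsPn z12.
  by apply/eqP/ffunP => k; apply/eqP; rewrite -[_ == _]negbK z12.
have d_gt0 : 0 < z1 k1 - z2 k1 by rewrite subr_gt0 lt_def z12k1 z21.
have [M z_le] := S_bounded; pose s := (M + 1 - z1 k1) / (z1 k1 - z2 k1).
have s_ge0 : 0 <= s by rewrite divr_ge0 ?ltW //; have := z_le z1 k1 S1; lra.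
(* Moving from [z1] away from [z2] never leaves [S], against boundedness. *)
have S' : S (shift s z1 z1 z2).
  apply: S_shift => // k; rewrite ffunE.
  by rewrite addr_ge0 ?(S_ge0 S1) // mulr_ge0 // subr_ge0.
have := z_le _ k1 S'; rewrite ffunE /s divfK ?gt_eqF //; lra.
Qed.

Lemma minimizer_shift s z z1 z2 t : minimizer z -> S z1 -> S z2 ->
  0 < t -> t < 1 -> z = comb t z1 z2 -> 0 <= s ->
  S (shift s z z1 z2) -> minimizer (shift s z z1 z2).
Proof.
move=> [Sz z_min] S1 S2 t0 t1 z_comb s0 S'; split=> // w Sw.
apply: le_trans (z_min _ Sw).
set z' := shift s z z1 z2; pose l := t / (t + s).
have ts0 : t + s != 0 by rewrite gt_eqF ?ltr_wpDr.
have l0 : 0 < l by rewrite divr_gt0 ?ltr_wpDr.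
have l1 : l <= 1 by rewrite ler_pdivrMr ?ltr_wpDr // mul1r lerDl.
have z_decomp : z = comb l z' z2.
  by apply/ffunP => k; rewrite /z' z_comb !ffunE /l; field.
have := F_concave S' S2 (ltW l0) l1; rewrite -z_decomp.
have := z_min _ S2; nra.
Qed.

Lemma minimizer_shrink z z1 z2 t : minimizer z -> S z1 -> S z2 ->
  0 < t -> t < 1 -> z = comb t z1 z2 -> z1 != z2 ->
  exists2 z', minimizer z' & (#|support z'| < #|support z|)%N.
Proof.
move=> z_min S1 S2 t0 t1 z_comb z12.
have [k1 z12k1] := exists_decreasing_coord S1 S2 z12.
have dk1 : z1 k1 - z2 k1 < 0 by rewrite subr_lt0.
have [s [k0 [s0 dk0 zk0 z'_ge0]]] :=
  ratio_test (u := fun k => z1 k - z2 k) (S_ge0 z_min.1) dk1.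
have off_support k : z k = 0 -> z1 k - z2 k = 0.
  move=> zk; have [|->->] := convex_comb_eq0 t0 t1 (S_ge0 S1 k) (S_ge0 S2 k).
    by rewrite -zk z_comb ffunE.
  by rewrite subrr.
have S' : S (shift s z z1 z2).
  by apply: S_shift z_min.1 S1 S2 _ => k; rewrite ffunE.
exists (shift s z z1 z2).
  exact: minimizer_shift z_min S1 S2 t0 t1 z_comb s0 S'.
apply: proper_card; apply/properP; split.
  apply/subsetP => k; rewrite !inE ffunE; apply: contra_neq => zk.
  by rewrite zk off_support // mulr0 addr0.
exists k0; last by rewrite inE ffunE zk0 eqxx.
by rewrite inE; apply: contraTneq dk0 => /off_support ->; rewrite ltxx.
Qed.

Lemma exists_extreme_minimizer z : minimizer z ->
  exists2 z', extreme z' & minimizer z'.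
Proof.
move Hn : #|support z| => n; elim/ltn_ind: n z Hn => n IH z supp_z z_min.
case: (pselect (exists z1 z2 t, [/\ S z1, S z2, 0 < t < 1,
                    z = comb t z1 z2 & z1 != z2])).
  move=> [z1 [z2 [t [S1 S2 /andP[t0 t1] z_comb z12]]]].
  have [z' z'_min lt_supp] := minimizer_shrink z_min S1 S2 t0 t1 z_comb z12.
  by rewrite supp_z in lt_supp; exact: IH lt_supp z' erefl z'_min.
move=> no_split; exists z => //; split=> [|z1 z2 t S1 S2 t0 t1 z_comb].
  exact: z_min.1.
by apply/eqP; apply: contra_notT no_split => z12; exists z1, z2, t; rewrite t0.
Qed.

End ConcaveMinimum.

Section Problem.
Variables (R : realType) (ny nI nx m1 m2 : nat) (Om : finType).
Variables (A : 'M[R]_(m1, ny)) (b : 'cV[R]_m1) (D : 'M[R]_(m2, ny)).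
Variables (B : Om -> 'M[R]_(m2, nx)) (d : Om -> 'cV[R]_m2) (ystar : 'cV[R]_ny).

Local Notation inX := (inX nI A b D B d).

Definition inX_fixed y x :=
  inX y x /\ forall i : 'I_ny, (i < nI)%N -> y i 0 = ystar i 0.

Lemma inX_fixed_shift s y x y1 x1 y2 x2 y' x' :
  inX_fixed y x -> inX_fixed y1 x1 -> inX_fixed y2 x2 ->
  y' = y + s *: (y1 - y2) -> (forall w, x' w = x w + s *: (x1 w - x2 w)) ->
  (forall i, 0 <= y' i 0) -> (forall w j, 0 <= x' w j 0) -> inX_fixed y' x'.
Proof.
move=> [[_ [_ [y_int [Ay Xy]]]] y_fix] [[_ [_ [_ [Ay1 Xy1]]]] y1_fix].
move=> [[_ [_ [_ [Ay2 Xy2]]]] y2_fix] ->{y'} x'E y'_ge0 x'_ge0.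
have y'_fix (i : 'I_ny) : (i < nI)%N -> (y + s *: (y1 - y2)) i 0 = ystar i 0.
  by move=> iI; rewrite !mxE y_fix // y1_fix // y2_fix // subrr mulr0 addr0.
split=> //; split=> //; split=> //; split.
  by move=> i iI; rewrite y'_fix // -y_fix //; apply: y_int.
split; first by rewrite mulmxDr -scalemxAr mulmxBr Ay Ay1 Ay2 subrr scaler0 addr0.
move=> w; rewrite x'E !mulmxDr -!scalemxAr !mulmxBr addrACA -scalerDr.
by rewrite addrACA -opprD Xy Xy1 Xy2 subrr scaler0 addr0.
Qed.

Variables (f : 'I_ny -> R -> R) (bp : 'I_ny -> seq R).
Variables (p : Om -> R) (c : Om -> 'cV[R]_nx).
Hypothesis f_concave : forall i, concave_fun (f i).
Hypothesis bp_valid : forall i, valid_breakpoints (bp i).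
Hypothesis bp_range : forall i y x, inX y x ->
  head 0 (bp i) <= y i 0 /\ y i 0 <= last 0 (bp i).

Local Notation obj := (objSP f bp p c).

Lemma objSP_concave t y x y1 x1 y2 x2 : inX y1 x1 -> inX y2 x2 ->
  0 <= t -> t <= 1 ->
  y = t *: y1 + (1 - t) *: y2 -> (forall w, x w = t *: x1 w + (1 - t) *: x2 w) ->
  t * obj y1 x1 + (1 - t) * obj y2 x2 <= obj y x.
Proof.
move=> X1 X2 t0 t1 yE xE; rewrite /objSP !mulrDr addrACA lerD //.
  rewrite !mulr_sumr -big_split /=; apply: ler_sum => i _.
  have [s_size s_sorted] := bp_valid i.
  have [h1 l1] := bp_range i X1; have [h2 l2] := bp_range i X2.
  by rewrite yE !mxE; apply: pwl_concave.
rewrite !mulr_sumr -big_split /=; apply: ler_sum => w _.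
have -> : \sum_(j < nx) c w j 0 * x w j 0 =
    t * (\sum_(j < nx) c w j 0 * x1 w j 0) +
    (1 - t) * (\sum_(j < nx) c w j 0 * x2 w j 0).
  by rewrite !mulr_sumr -big_split /=; apply: eq_bigr => j _; rewrite xE !mxE; ring.
by rewrite mulrDr (mulrCA t) (mulrCA (1 - t)).
Qed.

Local Notation K := ('I_ny + Om * 'I_nx)%type.

Definition coords (y : 'cV[R]_ny) (x : Om -> 'cV[R]_nx) : {ffun K -> R} :=
  [ffun k => match k with inl i => y i 0 | inr (w, j) => x w j 0 end].
Definition ypart (z : {ffun K -> R}) : 'cV[R]_ny := \col_i z (inl i).
Definition xpart (z : {ffun K -> R}) (w : Om) : 'cV[R]_nx := \col_j z (inr (w, j)).

Lemma ypart_coords y x : ypart (coords y x) = y.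
Proof. by apply/matrixP => i j; rewrite ord1 !mxE ffunE. Qed.

Lemma xpart_coords y x : xpart (coords y x) = x.
Proof. by apply: funext => w; apply/matrixP => j k; rewrite ord1 !mxE ffunE. Qed.

Lemma ypart_shift s z z1 z2 :
  ypart (shift s z z1 z2) = ypart z + s *: (ypart z1 - ypart z2).
Proof. by apply/matrixP => i j; rewrite !mxE ffunE. Qed.

Lemma xpart_shift s z z1 z2 w :
  xpart (shift s z z1 z2) w = xpart z w + s *: (xpart z1 w - xpart z2 w).
Proof. by apply/matrixP => i j; rewrite !mxE ffunE. Qed.

Lemma ypart_comb t z1 z2 :
  ypart (comb t z1 z2) = t *: ypart z1 + (1 - t) *: ypart z2.
Proof. by apply/matrixP => i j; rewrite !mxE ffunE. Qed.

Lemma xpart_comb t z1 z2 w :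
  xpart (comb t z1 z2) w = t *: xpart z1 w + (1 - t) *: xpart z2 w.
Proof. by apply/matrixP => i j; rewrite !mxE ffunE. Qed.

Definition coordX z := inX_fixed (ypart z) (xpart z).
Definition coord_obj z := obj (ypart z) (xpart z).

Lemma coordX_ge0 z : coordX z -> forall k, 0 <= z k.
Proof.
move=> [[y_ge0 [x_ge0 _]] _] [i|[w j]].
  by have := y_ge0 i; rewrite mxE.
by have := x_ge0 w j; rewrite mxE.
Qed.

Hypothesis X_bounded : exists M : R, forall y x, inX y x ->
  (forall i, `|y i 0| <= M) /\ (forall w j, `|x w j 0| <= M).

Lemma coordX_bounded : exists M, forall z k, coordX z -> z k <= M.
Proof.
have [M X_le] := X_bounded; exists M => z k [/X_le[y_le x_le] _].
case: k => [i|[w j]]; apply: le_trans (ler_norm _) _.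
  by have := y_le i; rewrite mxE.
by have := x_le w j; rewrite mxE.
Qed.

Lemma coordX_shift s z z1 z2 : coordX z -> coordX z1 -> coordX z2 ->
  (forall k, 0 <= shift s z z1 z2 k) -> coordX (shift s z z1 z2).
Proof.
move=> Sz Sz1 Sz2 z'_ge0.
apply: (inX_fixed_shift Sz Sz1 Sz2 (ypart_shift s z z1 z2) (xpart_shift s z z1 z2)).
  by move=> i; rewrite mxE.
by move=> w j; rewrite mxE.
Qed.

Lemma coord_obj_concave t z1 z2 : coordX z1 -> coordX z2 -> 0 <= t -> t <= 1 ->
  t * coord_obj z1 + (1 - t) * coord_obj z2 <= coord_obj (comb t z1 z2).
Proof.
move=> [X1 _] [X2 _] t0 t1.
exact: objSP_concave X1 X2 t0 t1 (ypart_comb t z1 z2) (xpart_comb t z1 z2).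
Qed.

Lemma extreme_coordX z :
  extreme coordX z -> extreme_point inX_fixed (ypart z) (xpart z).
Proof.
move=> [Sz z_ext]; split=> // y1 y2 x1 x2 t S1 S2 t0 t1 yE xE.
have z_comb : z = comb t (coords y1 x1) (coords y2 x2).
  apply/ffunP => -[i|[w j]]; rewrite !ffunE.
    by have /matrixP/(_ i 0) := yE; rewrite !mxE.
  by have /matrixP/(_ j 0) := xE w; rewrite !mxE.
have Sc y' x' : inX_fixed y' x' -> coordX (coords y' x').
  by rewrite /coordX ypart_coords xpart_coords.
have := z_ext _ _ _ (Sc _ _ S1) (Sc _ _ S2) t0 t1 z_comb.
move=> /(congr1 (fun z => (ypart z, xpart z))) [].
by rewrite !ypart_coords !xpart_coords => -> ->.
Qed.

End Problem.

Theorem lemma1 (R : realType) (ny nI nx m1 m2 : nat) (Om : finType)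
  (A : 'M[R]_(m1, ny)) (b : 'cV[R]_m1) (D : 'M[R]_(m2, ny))
  (p : Om -> R) (c : Om -> 'cV[R]_nx)
  (B : Om -> 'M[R]_(m2, nx)) (d : Om -> 'cV[R]_m2)
  (f : 'I_ny -> R -> R) (bp : 'I_ny -> seq R)
  (ystar : 'cV[R]_ny) (xstar : Om -> 'cV[R]_nx) :
  (nI <= ny)%N ->
  (* X nonempty and bounded *)
  (exists y x, inX nI A b D B d y x) ->
  (exists M : R, forall y x, inX nI A b D B d y x ->
     (forall i, `|y i 0| <= M) /\ (forall w j, `|x w j 0| <= M)) ->
  (* f_i concave and lower semicontinuous *)
  (forall i, concave_fun (f i)) ->
  (forall i, lsc_fun (f i)) ->
  (* breakpoints, covering all feasible y_i *)
  (forall i, valid_breakpoints (bp i)) ->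
  (forall i y x, inX nI A b D B d y x ->
     head 0 (bp i) <= y i 0 /\ y i 0 <= last 0 (bp i)) ->
  (* (ystar, xstar) is optimal for (SP) *)
  inX nI A b D B d ystar xstar ->
  (forall y x, inX nI A b D B d y x ->
     objSP f bp p c ystar xstar <= objSP f bp p c y x) ->
  exists (y : 'cV[R]_ny) (x : Om -> 'cV[R]_nx),
    extreme_point
      (fun y' x' => inX nI A b D B d y' x' /\
                    forall i : 'I_ny, (i < nI)%N -> y' i 0 = ystar i 0)
      y x /\
    inX nI A b D B d y x /\
    (forall y' x', inX nI A b D B d y' x' ->
       objSP f bp p c y x <= objSP f bp p c y' x').
Proof.
move=> _ _ X_bounded f_concave _ bp_valid bp_range Xstar star_opt.
pose S := coordX nI A b D B d ystar; pose F := coord_obj f bp p c.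
have S_star : S (coords ystar xstar).
  by rewrite /S /coordX ypart_coords xpart_coords.
have star_min : minimizer S F (coords ystar xstar).
  split=> // z [Xz _]; rewrite /F /coord_obj ypart_coords xpart_coords.
  exact: star_opt Xz.
have [z z_ext [[Xz _] z_min]] : exists2 z, extreme S z & minimizer S F z.
  apply: exists_extreme_minimizer star_min.
  - exact: coordX_ge0.
  - exact: coordX_bounded.
  - exact: coordX_shift.
  - exact: coord_obj_concave.
exists (ypart z), (xpart z); split; first exact: extreme_coordX z_ext.
split=> // y x Xyx.
apply: le_trans (z_min _ S_star) _.
by rewrite /F /coord_obj ypart_coords xpart_coords; apply: star_opt.
Qed.
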